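(* Assume $d'=1$, $t>1$, fix $j\in[t]$ and $n\in[t]\setminus\{j\}$, and let $2\le r\le\min(a,d)$. Fix ordered tuples $K=(k_1,\dots,k_r)$ and $L=(l_1,\dots,l_r)$ of distinct elements of $[d]$. For every $\alpha\in\mathbb N^r$ with $\sum_m\alpha_m=r$ there exists a map $f:[r]\to[r]$ with $|f^{-1}(m)|=\alpha_m$ for all $m$ such that every directed cycle of $f$ is a fixed point. For any such $f$, define the $r\times r$ matrix $M_\alpha(y)$ by \[ (M_\alpha)_{p,q}=\omega(k_{f(p)},k_p)\,y_{n,j}(\{k_{f(p)},k_p\},l_q),\qquad p,q\in[r], \] and $D_{\alpha,L}(y)=\det M_\alpha(y)$. Then for all $W$, \[ D_{\alpha,L}(\mu(W))=\Big(\prod_{m=1}^r v_{k_m}^{\alpha_m}\Big)\det(A_{K,L}), \] where $A_{K,L}$ is the submatrix of $A$ with rows $K$ and columns $L$. Consequently, for each $1\le k<r$, all $2\times2$ minors of the catalecticant matrix with rows indexed by multi-indices $\beta\in\mathbb N^r$ of degree $k$, columns indexed by multi-indices $\gamma\in\mathbb N^r$ of degree $r-k$, and entries $D_{\beta+\gamma,L}(y)$, are homogeneous polynomials of degree $2r$ vanishing on the attention variety.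
   Context: Setup: $Q,K\in\mathbb R^{a\times d}$, $V\in\mathbb R^{1\times d}$ with row $v=(v_1,\dots,v_d)$, $A=K^\top Q$, $\varphi_W(X)=VX(X^\top AX)$ for $X=(x_{kn})\in\mathbb R^{d\times t}$. For a size-2 multiset $\mathcal A$ on $[d]$, $b\in[d]$, $n\ne j$: $c_{n,j}(\mathcal A,b)$ is the coefficient of $(\prod_{u\in\mathcal A}x_{un})x_{bj}$ in $\varphi_W(X)[1,j]$ and $y_{n,j}(\mathcal A,b)=c_{n,j}(\mathcal A,b)/|\operatorname{Perm}(\mathcal A)|$, where $\operatorname{Perm}$ is the set of distinct orderings. $\omega(u,w)=1$ if $u=w$ and $2$ if $u\ne w$. $\mu$ maps $W=(Q,K,V)$ to all scaled coefficients (ambient coordinates with the same names); the attention variety is the Zariski closure of $\operatorname{im}\mu$. *)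

From HB Require Import structures.
From mathcomp Require Import all_boot all_order all_algebra.
From mathcomp Require Import mpoly.
Set Implicit Arguments. Unset Strict Implicit. Unset Printing Implicit Defensive.
Import Order.TTheory GRing.Theory Num.Theory.
Local Open Scope ring_scope.

(** Size-2 multisets on [d] = {0,..,d-1}: stored as the sorted pair (u,w), u <= w. *)
Definition ms2 (d : nat) := {p : 'I_d * 'I_d | (p.1 <= p.2)%N}.

Lemma mk2_proof d (u w : 'I_d) :
  ((if (u <= w)%N then (u, w) else (w, u)).1 <= (if (u <= w)%N then (u, w) else (w, u)).2)%N.
Proof. by case: ifP => //= /negbT; rewrite -ltnNge => /ltnW. Qed.

Definition mk2 d (u w : 'I_d) : ms2 d := exist (fun p : 'I_d * 'I_d => (p.1 <= p.2)%N) _ (mk2_proof u w).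

(** |Perm(A)| : number of distinct orderings of the size-2 multiset A *)
Definition permCard d (A : ms2 d) : nat := if (val A).1 == (val A).2 then 1%N else 2%N.

Definition omega (R : ringType) d (u w : 'I_d) : R := if u == w then 1 else 2.

(** Formal variables x_{kn}, k in [d], n in [t]: polynomial ring in #|[d]x[t]| variables. *)
Definition nX (d t : nat) := #|{: 'I_d * 'I_t}|.

Definition Xmat (R : comRingType) (d t : nat) : 'M[{mpoly R[nX d t]}]_(d, t) :=
  \matrix_(k, n) 'X_(enum_rank (k, n)).

Definition Amat (R : comRingType) (a d : nat) (Q K : 'M[R]_(a, d)) : 'M[R]_d := K^T *m Q.

Definition phiW (R : comRingType) (a d t : nat) (Q K : 'M[R]_(a, d)) (V : 'rV[R]_d)
  : 'rV[{mpoly R[nX d t]}]_t :=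
  (map_mx (fun c => c%:MP) V) *m Xmat R d t
    *m (((Xmat R d t)^T *m map_mx (fun c => c%:MP) (Amat Q K)) *m Xmat R d t).

Definition monoA (d t : nat) (A : ms2 d) (n j : 'I_t) (b : 'I_d) : 'X_{1..nX d t} :=
  (U_(enum_rank ((val A).1, n)) + U_(enum_rank ((val A).2, n)) + U_(enum_rank (b, j)))%MM.

Definition cnj (R : comRingType) (a d t : nat) (Q K : 'M[R]_(a, d)) (V : 'rV[R]_d)
  (n j : 'I_t) (A : ms2 d) (b : 'I_d) : R :=
  (phiW t Q K V ord0 j)@_(monoA A n j b).

Definition ynj (R : fieldType) (a d t : nat) (Q K : 'M[R]_(a, d)) (V : 'rV[R]_d)
  (n j : 'I_t) (A : ms2 d) (b : 'I_d) : R :=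
  cnj Q K V n j A b / (permCard A)%:R.

(** Ambient coordinates: y_{n,j}(A,b) for n, j in [t], n <> j, A a size-2 multiset, b in [d].
    Stored as (((n, j), A), b). *)
Definition ycoord (d t : nat) := {c : 'I_t * 'I_t * ms2 d * 'I_d | c.1.1.1 != c.1.1.2}.

Definition mkc (d t : nat) (n j : 'I_t) (hnj : n != j) (A : ms2 d) (b : 'I_d) : ycoord d t :=
  exist (fun c : 'I_t * 'I_t * ms2 d * 'I_d => c.1.1.1 != c.1.1.2) (((n, j), A), b) hnj.

Definition mu (R : fieldType) (a d t : nat) (Q K : 'M[R]_(a, d)) (V : 'rV[R]_d)
  (c : ycoord d t) : R :=
  let: (((n, j), A), b) := val c in ynj Q K V n j A b.

Definition nY (d t : nat) := #|{: ycoord d t}|.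

Definition Yvar (R : ringType) (d t : nat) (c : ycoord d t) : {mpoly R[nY d t]} :=
  'X_(enum_rank c).

Definition evalAt (R : comRingType) (d t : nat) (p : {mpoly R[nY d t]}) (y : ycoord d t -> R) : R :=
  p.@[fun i => y (enum_val i)].

(** The attention variety: Zariski closure of the image of mu (over all W = (Q,K,V)),
    i.e. the common zero set of all polynomials vanishing on im mu. *)
Definition attention_variety (R : fieldType) (a d t : nat) (y : ycoord d t -> R) : Prop :=
  forall p : {mpoly R[nY d t]},
    (forall (Q K : 'M[R]_(a, d)) (V : 'rV[R]_d), evalAt p (mu Q K V) = 0) ->
    evalAt p y = 0.

Definition admissible (r : nat) (alpha : 'I_r -> nat) (f : 'I_r -> 'I_r) : Prop :=
  (forall m, #|[set p | f p == m]| = alpha m) /\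
  (forall (p : 'I_r) (k : nat), (0 < k)%N -> iter k f p = p -> f p = p).

Definition Dpoly (R : ringType) (d t r : nat) (n j : 'I_t) (hnj : n != j)
  (kk ll : 'I_r -> 'I_d) (f : 'I_r -> 'I_r) : {mpoly R[nY d t]} :=
  \det (\matrix_(p, q) ((omega R (kk (f p)) (kk p))%:MP
                         * Yvar R (mkc hnj (mk2 (kk (f p)) (kk p)) (ll q)))).

(* The entry [omega(k_(f p), k_p) y_(n,j)({k_(f p), k_p}, l_q)] evaluated at [mu(W)] is
   [v_(k_(f p)) A_(k_p, l_q) + v_(k_p) A_(k_(f p), l_q)] (only the first term when
   [f p = p]), so [M_alpha(mu(W)) = B A_(K,L)] where row [p] of [B] is supported on the
   columns [p] and [f p].  Every permutation whose graph lies in that support fixes each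
   point, because [f] has no nontrivial cycle; hence [det B] is the product of its diagonal
   [prod_p v_(k_(f p)) = prod_m v_(k_m)^(alpha_m)].  The minors of the catalecticant then
   vanish on [im mu] because each [D_(beta+gamma)] factors as a product over [beta] times a
   product over [gamma] times [det A_(K,L)].  An admissible [f] exists: take the
   nondecreasing map with the prescribed fibres; a nondecreasing self-map of a chain has
   only fixed points as cycles. *)

From mathcomp Require Import all_boot all_order all_algebra.
From mathcomp Require Import mpoly.
From mathcomp Require Import fingroup perm.
From mathcomp Require Import ring zify.
Set Implicit Arguments. Unset Strict Implicit. Unset Printing Implicit Defensive.
Import Order.TTheory GRing.Theory Num.Theory.
Local Open Scope ring_scope.

Lemma nondecreasing_periodic_fixed disp (T : orderType disp) (f : T -> T)
    (x : T) (k : nat) :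
  {homo f : y z / (y <= z)%O} -> (0 < k)%N -> iter k f x = x -> f x = x.
Proof.
case: k => [//|k] + _.
wlog x_le_fx : disp T f x / (x <= f x)%O.
  move=> wlog_le f_homo; have [x_le_fx|/ltW fx_le_x] := leP x (f x).
    exact: wlog_le.
  by apply: (wlog_le _ T^d) => // y z; apply: f_homo.
move=> f_homo fix_x.
have chain i : (x <= iter i f x)%O.
  by elim: i => [//|i IHi]; rewrite iterS; exact: le_trans x_le_fx (f_homo _ _ IHi).
apply/eqP; rewrite eq_le x_le_fx andbT -[X in (_ <= X)%O]fix_x iterS.
exact/f_homo/chain.
Qed.

Lemma card_fiber_nth (T : eqType) (r : nat) (s : seq T) (x0 y : T) :
  size s = r -> #|[set i : 'I_r | nth x0 s i == y]| = count_mem y s.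
Proof.
move=> <-; rewrite -sum1_count (big_nth x0) big_mkord -sum1_card.
by apply: eq_bigl => i; rewrite inE.
Qed.

Lemma exists_nondecreasing_fibers (r : nat) (alpha : 'I_r -> nat) :
  (\sum_(m < r) alpha m)%N = r ->
  exists f : 'I_r -> 'I_r,
    {homo f : p q / (p <= q)%O} /\ forall m, #|[set p | f p == m]| = alpha m.
Proof.
move=> sum_alpha.
pose s := sort <=%O (flatten [seq nseq (alpha m) m | m <- enum 'I_r]).
have size_s : size s = r.
  rewrite size_sort size_flatten /shape -map_comp sumnE big_map enumT -[RHS]sum_alpha.
  by apply: eq_bigr => m _; rewrite /= size_nseq.
exists (fun p => nth p s p); split.
  move=> p q p_le_q; rewrite [nth q s q](set_nth_default p) ?size_s //.
  apply: (sorted_leq_nth le_trans le_refl); rewrite ?inE ?size_s //.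
  by apply: sort_sorted => x y; exact: le_total.
move=> m; transitivity #|[set p : 'I_r | nth m s p == m]|.
  by apply: eq_card => p; rewrite !inE (set_nth_default m) ?size_s.
rewrite card_fiber_nth // count_sort count_flatten -map_comp.
rewrite sumnE big_map enumT (bigD1 m) //= count_nseq /= eqxx mul1n.
by rewrite big1 ?addn0 // => m' m'_neq_m; rewrite count_nseq /= (negbTE m'_neq_m).
Qed.

Lemma admissible_exists (r : nat) (alpha : 'I_r -> nat) :
  (\sum_(m < r) alpha m)%N = r -> exists f : 'I_r -> 'I_r, admissible alpha f.
Proof.
case/exists_nondecreasing_fibers=> f [f_homo f_fibers].
by exists f; split=> // p k; apply: nondecreasing_periodic_fixed.
Qed.

Lemma scale_mnm3 (R : comNzRingType) (N : nat) (x y : R) (i k l : 'I_N) :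
  (x%:MP * 'X_i) * (('X_k * y%:MP) * 'X_l)
  = (x * y) *: 'X_[U_(i) + U_(k) + U_(l)] :> {mpoly R[N]}.
Proof. by rewrite !mpolyXD -mul_mpolyC mpolyCM; ring. Qed.

Lemma phiW_expand (R : comNzRingType) (a d t : nat) (Q K : 'M[R]_(a, d))
    (V : 'rV[R]_d) (j : 'I_t) :
  phiW t Q K V ord0 j =
  \sum_(m < t) \sum_(k < d) \sum_(b < d) \sum_(u < d)
     (V ord0 k * Amat Q K u b) *:
       'X_[U_(enum_rank (k, m)) + U_(enum_rank (u, m)) + U_(enum_rank (b, j))].
Proof.
rewrite /phiW !mxE; apply: eq_bigr => m _.
rewrite !mxE mulr_suml; apply: eq_bigr => k _.
rewrite !mxE mulr_sumr; apply: eq_bigr => b _.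
rewrite !mxE mulr_suml mulr_sumr; apply: eq_bigr => u _.
by rewrite !mxE scale_mnm3.
Qed.

Section PhiWMonomials.

Variables (d t : nat) (n j : 'I_t).
Hypothesis n_neq_j : n != j.

Local Notation x k m := (U_(enum_rank (k, m)) : 'X_{1..nX d t})%MM.

Lemma phiW_mnm_eq (k u b' u1 u2 b : 'I_d) (m : 'I_t) :
  (x k m + x u m + x b' j == x u1 n + x u2 n + x b j)%MM
  = [&& m == n, b' == b & (k == u1) && (u == u2) || (k == u2) && (u == u1)].
Proof.
have j_neq_n : (j == n) = false by rewrite eq_sym (negbTE n_neq_j).
apply/eqP/idP => [E|]; last first.
  case/and3P=> /eqP-> /eqP-> /orP[] /andP[/eqP-> /eqP->] //.
  by congr (_ + _)%MM; exact: addmC.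
have mult z : (((k, m) == z) + ((u, m) == z) + ((b', j) == z)
              = ((u1, n) == z) + ((u2, n) == z) + ((b, j) == z))%N.
  by move/mnmP: E => /(_ (enum_rank z)); rewrite !mnmDE !mnm1E !(inj_eq enum_rank_inj).
have /eqP m_eq_n : m == n.
  apply: contraT => m_neq_n; move: (mult (u1, n)).
  by rewrite !xpair_eqE (negbTE m_neq_n) j_neq_n !andbF !eqxx /=; lia.
subst m; rewrite eqxx /=.
have b'_eq_b : b' == b.
  move: (mult (b', j)); rewrite !xpair_eqE (negbTE n_neq_j) !andbF !eqxx /= !add0n.
  by rewrite -!val_eqE /=; lia.
rewrite b'_eq_b /=; move: (mult (k, n)) (mult (u, n)).
by rewrite !xpair_eqE !eqxx j_neq_n ?andbF ?andbT ?addn0 -!val_eqE /=; clear; lia.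
Qed.

End PhiWMonomials.

Lemma sum_unordered_pair_delta (R : nzSemiRingType) (d : nat)
    (F : 'I_d -> 'I_d -> R) (u1 u2 : 'I_d) :
  \sum_(k < d) \sum_(u < d)
     F k u * ((k == u1) && (u == u2) || (k == u2) && (u == u1))%:R
  = if u1 == u2 then F u1 u1 else F u1 u2 + F u2 u1.
Proof.
have delta2 w1 w2 : \sum_(k < d) \sum_(u < d) F k u * ((k == w1) && (u == w2))%:R
                    = F w1 w2.
  rewrite (bigD1 w1) //= [X in _ + X]big1 => [|k /negbTE k_neq]; last first.
    by apply: big1 => u _; rewrite k_neq mulr0.
  rewrite addr0 (bigD1 w2) //= [X in _ + X]big1 => [|u /negbTE u_neq]; last first.
    by rewrite u_neq andbF mulr0.
  by rewrite !eqxx mulr1 addr0.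
case: eqVneq => [<-|u1_neq_u2].
  by rewrite -[RHS]delta2; apply: eq_bigr => k _; apply: eq_bigr => u _; rewrite orbb.
rewrite -delta2 -[F u2 u1]delta2 -big_split; apply: eq_bigr => k _.
rewrite -big_split; apply: eq_bigr => u _ /=; rewrite -mulrDr -natrD.
by congr (_ * _%:R); move: u1_neq_u2; rewrite -!val_eqE /=; lia.
Qed.

Lemma phiW_coef (R : comNzRingType) (a d t : nat) (Q K : 'M[R]_(a, d))
    (V : 'rV[R]_d) (n j : 'I_t) (u1 u2 b : 'I_d) :
  n != j ->
  (phiW t Q K V ord0 j)@_(U_(enum_rank (u1, n)) + U_(enum_rank (u2, n))
                          + U_(enum_rank (b, j)))%MM
  = if u1 == u2 then V ord0 u1 * Amat Q K u1 b
    else V ord0 u1 * Amat Q K u2 b + V ord0 u2 * Amat Q K u1 b.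
Proof.
move=> n_neq_j; pose P (k u : 'I_d) := (k == u1) && (u == u2) || (k == u2) && (u == u1).
transitivity (\sum_(m < t) \sum_(k < d) \sum_(b' < d) \sum_(u < d)
    V ord0 k * Amat Q K u b' * [&& m == n, b' == b & P k u]%:R).
  rewrite phiW_expand; do 4 (rewrite raddf_sum; apply: eq_bigr => ? _).
  by rewrite /= mcoeffZ mcoeffX phiW_mnm_eq.
rewrite (bigD1 n) //= [X in _ + X]big1 ?addr0 => [|m /negbTE m_neq_n]; last first.
  by do 3 (apply: big1 => ? _); rewrite m_neq_n mulr0.
rewrite -(sum_unordered_pair_delta (fun k u => V ord0 k * Amat Q K u b)).
apply: eq_bigr => k _; rewrite (bigD1 b) //= [X in _ + X]big1 ?addr0 => [|b' /negbTE b'_neq_b].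
  by apply: eq_bigr => u _; rewrite !eqxx.
by apply: big1 => u _; rewrite b'_neq_b andbF mulr0.
Qed.

Lemma omega_ynj (R : fieldType) (a d t : nat) (Q K : 'M[R]_(a, d)) (V : 'rV[R]_d)
    (n j : 'I_t) (u w b : 'I_d) :
  2%:R != 0 :> R -> n != j ->
  omega R u w * ynj Q K V n j (mk2 u w) b
  = if u == w then V ord0 u * Amat Q K u b
    else V ord0 u * Amat Q K w b + V ord0 w * Amat Q K u b.
Proof.
move=> two_neq0 n_neq_j; rewrite /ynj /cnj /monoA /permCard /omega /mk2 /=.
case: leqP => _ /=; rewrite phiW_coef //; case: (eqVneq u w) => [->|u_neq_w];
  rewrite ?eqxx ?(negbTE u_neq_w) ?(eq_sym w u) ?(negbTE u_neq_w) /= ?divr1 ?mul1r //.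
  by rewrite mulrC divfK.
by rewrite mulrC divfK // addrC.
Qed.

Section FunctionalGraph.

Variables (r : nat) (f : 'I_r -> 'I_r).
Hypothesis f_cycles : forall (p : 'I_r) (k : nat), (0 < k)%N -> iter k f p = p -> f p = p.

(* A moved point [p] of such [s] has its whole [s]-orbit moved, so that orbit follows
   [f]; it closes up after [#[s]] steps, making [p] a point of a nontrivial [f]-cycle. *)
Lemma perm_in_graph_eq1 (s : 'S_r) : (forall i, s i = i \/ s i = f i) -> s = 1%g.
Proof.
move=> s_graph; apply/permP => p; rewrite perm1; case: (eqVneq (s p) p) => // s_moves_p.
have orbit_moved k : s (iter k s p) != iter k s p.
  apply: contra s_moves_p => /eqP fix_k; apply/eqP/(@perm_inj _ (s ^+ k)%g).
  by rewrite !permX -iterSr iterS fix_k.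
have orbit_f k : iter k s p = iter k f p.
  elim: k => // k IHk; rewrite /= -IHk.
  by case: (s_graph (iter k s p)) => // fix_k; move: (orbit_moved k); rewrite fix_k eqxx.
have f_fix_p : f p = p.
  apply: (f_cycles (order_gt0 s)).
  by rewrite -orbit_f -permX expg_order perm1.
by case: (s_graph p) s_moves_p => ->; rewrite ?f_fix_p eqxx.
Qed.

Lemma det_supp_graph (R : comNzRingType) (B : 'M[R]_r) :
  (forall p q, q != p -> q != f p -> B p q = 0) -> \det B = \prod_p B p p.
Proof.
move=> B_supp; rewrite /determinant (bigD1 1%g) //= [X in _ + X]big1 => [|s s_neq1].
  by rewrite odd_perm1 expr0 mul1r addr0; apply: eq_bigr => i _; rewrite perm1.
case: (pickP (fun i => (s i != i) && (s i != f i))) => [i /andP[si_neq_i si_neq_fi]|].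
  by rewrite (bigD1 i) //= B_supp // mul0r mulr0.
move=> s_graph; suff s_eq1 : s = 1%g by rewrite s_eq1 eqxx in s_neq1.
apply: perm_in_graph_eq1 => i; move/negbT: (s_graph i).
by rewrite negb_and !negbK => /orP[] /eqP; [left | right].
Qed.

End FunctionalGraph.

Lemma sum_delta_mul (R : pzSemiRingType) (I : finType) (i0 : I) (F : I -> R) :
  \sum_i (i == i0)%:R * F i = F i0.
Proof.
under eq_bigr do rewrite mulr_natl mulrb.
by rewrite -big_mkcond big_pred1_eq.
Qed.

Lemma prod_comp_fibers (R : comPzSemiRingType) (I J : finType) (f : I -> J)
    (alpha : J -> nat) (F : J -> R) :
  (forall m, #|[set p | f p == m]| = alpha m) ->
  \prod_p F (f p) = \prod_m F m ^+ alpha m.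
Proof.
move=> f_fibers; rewrite (partition_big f xpredT) //=; apply: eq_bigr => m _.
rewrite (eq_bigr (fun _ => F m)) => [|p /eqP-> //].
by rewrite prodr_const -f_fibers; congr (_ ^+ _); apply: eq_card => p; rewrite inE.
Qed.

Lemma Dpoly_mu (R : fieldType) (a d t : nat) (n j : 'I_t) (n_neq_j : n != j)
    (r : nat) (kk ll : 'I_r -> 'I_d) (alpha : 'I_r -> nat) (f : 'I_r -> 'I_r)
    (Q K : 'M[R]_(a, d)) (V : 'rV[R]_d) :
  2%:R != 0 :> R -> injective kk -> admissible alpha f ->
  evalAt (Dpoly R n_neq_j kk ll f) (mu Q K V)
  = (\prod_(m < r) V ord0 (kk m) ^+ alpha m)
    * \det (\matrix_(p, q) Amat Q K (kk p) (ll q)).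
Proof.
move=> two_neq0 kk_inj [f_fibers f_cycles]; rewrite /evalAt /Dpoly -det_map_mx.
set A_KL := \matrix_(p, q) Amat Q K (kk p) (ll q).
pose B := \matrix_(p, p') ((p' == p)%:R * V ord0 (kk (f p))
                           + (p' == f p)%:R * ((f p != p)%:R * V ord0 (kk p))).
have -> : map_mx (meval (fun i => mu Q K V (enum_val i)))
            (\matrix_(p, q) ((omega R (kk (f p)) (kk p))%:MP
                             * Yvar R (mkc n_neq_j (mk2 (kk (f p)) (kk p)) (ll q))))
          = B *m A_KL.
  apply/matrixP => p q; rewrite !mxE mevalM mevalC /Yvar mevalXU enum_rankK /=.
  rewrite omega_ynj // (inj_eq kk_inj).
  under eq_bigr do rewrite !mxE mulrDl -!mulrA.
  rewrite big_split /= !sum_delta_mul !mxE.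
  by case: (eqVneq (f p) p) => [->|_]; rewrite ?mul0r ?addr0 ?mul1r // mulrC [X in _ + X]mulrC.
rewrite det_mulmx [\det B](det_supp_graph f_cycles); last first.
  by move=> p q /negbTE q_neq_p /negbTE q_neq_fp; rewrite mxE q_neq_p q_neq_fp !mul0r addr0.
congr (_ * _); rewrite -(prod_comp_fibers (fun m => V ord0 (kk m)) f_fibers).
apply: eq_bigr => p _; rewrite !mxE eqxx mul1r.
by case: eqVneq => [<-|_]; rewrite ?eqxx !mul0r ?mulr0 addr0.
Qed.

Lemma dhomog_prod_deg (R : comNzRingType) (N : nat) (I : finType)
    (F : I -> {mpoly R[N]}) (deg : I -> nat) :
  (forall i, F i \is (deg i).-homog) -> \prod_i F i \is (\sum_i deg i)%N.-homog.
Proof.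
move=> F_homog; apply: (big_ind2 (fun p k => p \is k.-homog)) => //.
- exact: dhomog1.
- by move=> p k q l; apply: dhomogM.
Qed.

Lemma Dpoly_homog (R : comNzRingType) (d t r : nat) (n j : 'I_t) (n_neq_j : n != j)
    (kk ll : 'I_r -> 'I_d) (f : 'I_r -> 'I_r) :
  Dpoly R n_neq_j kk ll f \is r.-homog.
Proof.
rewrite /Dpoly; set M := \matrix_(p, q) _.
have M_homog p q : M p q \is 1.-homog.
  by rewrite mxE mul_mpolyC dhomogZ // /Yvar dhomogX; apply/eqP/mdeg1.
rewrite /determinant; apply: rpred_sum => s _; rewrite mulr_sign.
have := @dhomog_prod_deg _ _ _ (fun i => M i (s i)) (fun=> 1%N) (fun i => M_homog i (s i)).
by rewrite sum1_card card_ord; case: (odd_perm s); rewrite ?rpredN.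
Qed.

Theorem mainTheorem12 (R : realFieldType) (a d t : nat) (j n : 'I_t) (hnj : n != j)
  (r : nat) (kk ll : 'I_r -> 'I_d) :
  (1 < t)%N -> (2 <= r)%N -> (r <= minn a d)%N -> injective kk -> injective ll ->
  (* existence of an admissible f *)
  (forall alpha : 'I_r -> nat, (\sum_(m < r) alpha m)%N = r ->
     exists f : 'I_r -> 'I_r, admissible alpha f) /\
  (* the determinant identity, for every admissible f *)
  (forall (alpha : 'I_r -> nat) (f : 'I_r -> 'I_r),
     (\sum_(m < r) alpha m)%N = r -> admissible alpha f ->
     forall (Q K : 'M[R]_(a, d)) (V : 'rV[R]_d),
       evalAt (Dpoly R hnj kk ll f) (mu Q K V)
       = (\prod_(m < r) V ord0 (kk m) ^+ alpha m)
         * \det (\matrix_(p, q) Amat Q K (kk p) (ll q))) /\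
  (* catalecticant 2x2 minors, for any choice of admissible f for each alpha *)
  (forall F : ('I_r -> nat) -> 'I_r -> 'I_r,
     (forall alpha : 'I_r -> nat, (\sum_(m < r) alpha m)%N = r -> admissible alpha (F alpha)) ->
     forall k : nat, (1 <= k)%N -> (k < r)%N ->
     forall b1 b2 g1 g2 : 'I_r -> nat,
       (\sum_(m < r) b1 m)%N = k -> (\sum_(m < r) b2 m)%N = k ->
       (\sum_(m < r) g1 m)%N = (r - k)%N -> (\sum_(m < r) g2 m)%N = (r - k)%N ->
       let D := fun (be ga : 'I_r -> nat) =>
                  Dpoly R hnj kk ll (F (fun m => (be m + ga m)%N)) in
       let minor := D b1 g1 * D b2 g2 - D b1 g2 * D b2 g1 in
       minor \is (2 * r)%N.-homog /\
       (forall y : ycoord d t -> R, attention_variety a y -> evalAt minor y = 0)).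
Proof.
move=> _ _ _ kk_inj _; have two_neq0 : 2%:R != 0 :> R by rewrite pnatr_eq0.
split; first exact: admissible_exists.
split=> [alpha f _ f_adm Q K V|]; first exact: Dpoly_mu.
move=> F F_adm k _ k_lt_r b1 b2 g1 g2 b1_sum b2_sum g1_sum g2_sum D minor.
have D_mu be ga (Q K : 'M[R]_(a, d)) (V : 'rV[R]_d) :
    (\sum_(m < r) be m)%N = k -> (\sum_(m < r) ga m)%N = (r - k)%N ->
    evalAt (D be ga) (mu Q K V)
    = (\prod_(m < r) V ord0 (kk m) ^+ be m) * (\prod_(m < r) V ord0 (kk m) ^+ ga m)
      * \det (\matrix_(p, q) Amat Q K (kk p) (ll q)).
  move=> be_sum ga_sum.
  have sum_r : (\sum_(m < r) (be m + ga m))%N = r.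
    by rewrite big_split /= be_sum ga_sum subnKC // ltnW.
  rewrite /D (Dpoly_mu _ _ _ _ _ two_neq0 kk_inj (F_adm _ sum_r)) -big_split /=.
  by congr (_ * _); apply: eq_bigr => m _; rewrite exprD.
split; first by rewrite mul2n -addnn rpredB ?dhomogM ?Dpoly_homog.
move=> y y_attn; apply: y_attn => Q K V.
rewrite /minor /evalAt mevalB !mevalM -!/(evalAt _ _) !D_mu //; ring.
Qed.
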